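(* Let $\mathcal{C}=(C_1,\ldots,C_m)$ be a camera arrangement. (1) Let $L\subseteq\mathbb{P}^3$ be a line containing no center. Let $\phi_L:L\to\mathbb{P}^1$ and $\psi_i:C_i\cdot L\to\mathbb{P}^1$ ($i=1,\ldots,m$) be any linear isomorphisms, and let $\widetilde{\mathcal{C}}=(\widetilde C_1,\ldots,\widetilde C_m)$ with $\widetilde C_i=\psi_i\circ C_i\circ\phi_L^{-1}$ (a $2\times2$ matrix). Then $(\psi_1,\ldots,\psi_m):\mathcal{M}_\mathcal{C}^L\to\mathcal{M}^{1,1}_{\widetilde{\mathcal{C}}}$ is a linear isomorphism. (2) Let $X\in\mathbb{P}^3$ be distinct from all centers. Let $\phi_X:\Lambda(X)\to\mathbb{P}^2$ and $\psi_i:\Lambda(C_iX)\to\mathbb{P}^1$ ($i=1,\ldots,m$) be any linear isomorphisms, and let $\widehat{\mathcal{C}}=(\widehat C_1,\ldots,\widehat C_m)$ with $\widehat C_i=\psi_i\circ C_i\circ\phi_X^{-1}$ (a $2\times 3$ matrix). Then $(\psi_1,\ldots,\psi_m):\mathcal{L}_\mathcal{C}^X\to\mathcal{M}^{2,1}_{\widehat{\mathcal{C}}}$ is a linear isomorphism.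
   Context: All spaces are complex projective. A camera is a full-rank $3\times4$ complex matrix $C:\mathbb{P}^3\dashrightarrow\mathbb{P}^2$ with center its kernel; a camera arrangement $\mathcal{C}=(C_1,\ldots,C_m)$, $m\ge 2$, has pairwise distinct centers. For a line $L$ spanned by $u,v$, $C\cdot L:=Cu\times Cv\in\mathbb{P}^2$, identified with the image line $\{x:(C\cdot L)^Tx=0\}\subseteq\mathbb{P}^2$ (a copy of $\mathbb{P}^1$). $\Lambda(X)$ is the set of lines in $\mathbb{P}^3$ through $X$ (a plane in the Plücker embedding of the Grassmannian of lines), and for a point $y\in\mathbb{P}^2$, $\Lambda(y)$ is the set of lines in $\mathbb{P}^2$ through $y$ (a line in the dual plane); $C_i$ maps a line through $X$ not through $c_i$ to a line through $C_iX$, so $C_i\circ\phi_X^{-1}$ is a linear map $\mathbb{P}^2\dashrightarrow\Lambda(C_iX)$. $\mathcal{M}_\mathcal{C}^L$ is the Zariski closure of the image of $L\ni Y\mapsto(C_1Y,\ldots,C_mY)$; $\mathcal{L}_\mathcal{C}^X$ is the Zariski closure of the image of $\Lambda(X)\ni L'\mapsto(C_1\cdot L',\ldots,C_m\cdot L')$. For an arrangement $\widetilde{\mathcal{C}}$ of full-rank $2\times2$ matrices, $\mathcal{M}^{1,1}_{\widetilde{\mathcal{C}}}\subseteq(\mathbb{P}^1)^m$ is the Zariski closure of the image of $\mathbb{P}^1\ni Y\mapsto(\widetilde C_1Y,\ldots,\widetilde C_mY)$; for an arrangement $\widehat{\mathcal{C}}$ of full-rank $2\times 3$ matrices, $\mathcal{M}^{2,1}_{\widehat{\mathcal{C}}}\subseteq(\mathbb{P}^1)^m$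 is the Zariski closure of the image of $\mathbb{P}^2\dashrightarrow(\mathbb{P}^1)^m$, $Y\mapsto(\widehat C_1Y,\ldots,\widehat C_mY)$. A linear isomorphism means an invertible linear map. *)

From HB Require Import structures.
From mathcomp Require Import all_boot all_order all_algebra.
From mathcomp Require Import multinomials.mpoly.
Set Implicit Arguments. Unset Strict Implicit. Unset Printing Implicit Defensive.
Import Order.TTheory GRing.Theory.
Local Open Scope ring_scope.

Section Defs.
Variable F : closedFieldType.

Definition proj_eq n (u v : 'cV[F]_n) : Prop := exists2 a : F, a != 0 & u = a *: v.

Definition is_center (C : 'M[F]_(3,4)) (c : 'cV[F]_4) : Prop := c != 0 /\ C *m c = 0.

Definition camera_arrangement m (C : 'I_m -> 'M[F]_(3,4)) : Prop :=
  [/\ (2 <= m)%N,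
      forall i, \rank (C i) = 3%N
    & forall i j : 'I_m, i != j -> forall c d, is_center (C i) c -> is_center (C j) d ->
        ~ proj_eq c d].

Definition cross (a b : 'cV[F]_3) : 'cV[F]_3 :=
  \col_(k < 3) (a (inord ((k + 1) %% 3)) 0 * b (inord ((k + 2) %% 3)) 0
              - a (inord ((k + 2) %% 3)) 0 * b (inord ((k + 1) %% 3)) 0).

(* Pluecker coordinates of the line spanned by u, v, in the order
   (01,02,03,12,13,23) *)
Definition pl1 (k : 'I_6) : 'I_4 := inord (nth 0%N [:: 0; 0; 0; 1; 1; 2]%N k).
Definition pl2 (k : 'I_6) : 'I_4 := inord (nth 0%N [:: 1; 2; 3; 2; 3; 3]%N k).
Definition plucker (u v : 'cV[F]_4) : 'cV[F]_6 :=
  \col_(k < 6) (u (pl1 k) 0 * v (pl2 k) 0 - u (pl2 k) 0 * v (pl1 k) 0).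

(* Zariski closure in (P^n)^m, points given by representatives w : 'I_m -> F^(n+1).
   Polynomials in the m*(n+1) coordinates x_{i,j}, indexed through mxvec_index. *)
Definition mv_coords m n (w : 'I_m -> 'cV[F]_n.+1) : 'I_(m * n.+1) -> F :=
  fun t => mxvec (\matrix_(i < m, j < n.+1) w i j 0) 0 t.

Definition multihomogeneous m n (f : {mpoly F[m * n.+1]}) : Prop :=
  forall i : 'I_m, exists d : nat, forall mu, mu \in msupp f ->
    (\sum_(j < n.+1) mu (mxvec_index i j))%N = d.

Definition mv_closure m n (S : ('I_m -> 'cV[F]_n.+1) -> Prop)
    (w : 'I_m -> 'cV[F]_n.+1) : Prop :=
  (forall i, w i != 0) /\
  forall f : {mpoly F[m * n.+1]}, multihomogeneous f ->
    (forall v, S v -> (forall i, v i != 0) -> f.@[mv_coords v] = 0) ->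
    f.@[mv_coords w] = 0.

(* image of the (rational) map Y |-> (A_1 Y, ..., A_m Y), on its domain *)
Definition mv_image m n k (A : 'I_m -> 'M[F]_(k.+1, n.+1))
    (w : 'I_m -> 'cV[F]_k.+1) : Prop :=
  exists2 Y : 'cV[F]_n.+1, Y != 0 &
    forall i, A i *m Y != 0 /\ proj_eq (w i) (A i *m Y).

Definition multiview m n k (A : 'I_m -> 'M[F]_(k.+1, n.+1)) :=
  mv_closure (mv_image A).

(* M_C^L, the line L being the column space of P *)
Definition MCL m (C : 'I_m -> 'M[F]_(3,4)) (P : 'M[F]_(4,2)) :=
  mv_closure (fun w : 'I_m -> 'cV[F]_3 =>
    exists2 Y : 'cV[F]_4, Y != 0 /\ (exists a, Y = P *m a) &
      forall i, C i *m Y != 0 /\ proj_eq (w i) (C i *m Y)).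

(* L_C^X : image of lines L' = span(X, Y) through X under
   L' |-> (C_1 . L', ..., C_m . L'), C_i . L' = C_i X x C_i Y *)
Definition LCX m (C : 'I_m -> 'M[F]_(3,4)) (X : 'cV[F]_4) :=
  mv_closure (fun w : 'I_m -> 'cV[F]_3 =>
    exists2 Y : 'cV[F]_4, plucker X Y != 0 &
      forall i, cross (C i *m X) (C i *m Y) != 0 /\
                proj_eq (w i) (cross (C i *m X) (C i *m Y))).

Definition mv_lin_iso m n k (A : 'I_m -> 'M[F]_(k.+1, n.+1))
    (S : ('I_m -> 'cV[F]_n.+1) -> Prop) (T : ('I_m -> 'cV[F]_k.+1) -> Prop) : Prop :=
  [/\ forall w, S w -> T (fun i => A i *m w i),
      forall z, T z -> exists2 w, S w & forall i, proj_eq (z i) (A i *m w i)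
    & forall w w', S w -> S w' ->
        (forall i, proj_eq (A i *m w i) (A i *m w' i)) ->
        forall i, proj_eq (w i) (w' i)].

End Defs.

From HB Require Import structures.
From mathcomp Require Import all_boot all_order all_algebra.
From mathcomp Require Import multinomials.mpoly.
From mathcomp Require Import ring.
Set Implicit Arguments. Unset Strict Implicit. Unset Printing Implicit Defensive.
Import GRing.Theory.
Local Open Scope ring_scope.

(* Both parts are instances of one principle.  Let linear maps A_i be
   invertible, with inverses B_i, on subspaces V_i that contain the i-th
   components of all points of the closure of a set S, and let w |-> (A_i w_i)
   and t |-> (B_i t_i) map S into a set T and T into S.  Pulling back a
   multihomogeneous polynomial along a factorwise linear map keeps it
   multihomogeneous, so each of the two maps sends one closure into the other,
   and (A_i) is a bijection between the closures.  The V_i are cut out by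
   linear equations, which pass from S to its closure: for M_C^L they are the
   images of L, for L_C^X the planes orthogonal to C_i X.  On the parametrized
   sets, psi_i C_i phi_L^{-1} is C~_i by definition, and psi_i (C_i X x C_i Y)
   is C^_i applied to the coordinates of the line XY. *)

(** * Multihomogeneous polynomials *)

Section BlockDegree.
Variables (F : fieldType) (m n : nat).
Implicit Types (p q : {mpoly F[m * n.+1]}) (mu : 'X_{1..m * n.+1}).

Definition block_deg (i : 'I_m) mu : nat := (\sum_(j < n.+1) mu (mxvec_index i j))%N.

Definition homog_block (i : 'I_m) (d : nat) p : Prop :=
  forall mu, mu \in msupp p -> block_deg i mu = d.

Lemma block_degD i mu1 mu2 :
  block_deg i (mu1 + mu2)%MM = (block_deg i mu1 + block_deg i mu2)%N.
Proof. by rewrite /block_deg -big_split; apply: eq_bigr => j _; rewrite mnmDE. Qed.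

Lemma homog_block_sum i d (I : Type) (r : seq I) (P : pred I) (G : I -> {mpoly F[m * n.+1]}) :
  (forall x, P x -> homog_block i d (G x)) -> homog_block i d (\sum_(x <- r | P x) G x).
Proof.
move=> hG; elim/big_rec: _ => [|x q Px hq] mu; first by rewrite msupp0.
by move/msuppD_le; rewrite mem_cat => /orP[/(hG x Px)|/hq].
Qed.

Lemma homog_blockZ i d c p : homog_block i d p -> homog_block i d (c *: p).
Proof. by move=> hp mu /msuppZ_le /hp. Qed.

Lemma homog_blockM i d1 d2 p q :
  homog_block i d1 p -> homog_block i d2 q -> homog_block i (d1 + d2) (p * q).
Proof.
move=> hp hq mu /msuppM_le /allpairsP [[mu1 mu2] /= [/hp <- /hq <- ->]].
exact: block_degD.
Qed.

Lemma homog_block1 i : homog_block i 0 1.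
Proof.
move=> mu; rewrite msupp1 inE => /eqP ->.
by rewrite /block_deg big1 // => j _; rewrite mnm0E.
Qed.

Lemma homog_block_prod i N (d : 'I_N -> nat) (G : 'I_N -> {mpoly F[m * n.+1]}) :
  (forall t, homog_block i (d t) (G t)) -> homog_block i (\sum_t d t) (\prod_t G t).
Proof.
move=> hG; elim/big_rec2: _ => [|t d' q _ hq]; first exact: homog_block1.
exact: homog_blockM.
Qed.

Lemma homog_blockX i d p e : homog_block i d p -> homog_block i (d * e) (p ^+ e).
Proof.
move=> hp; elim: e => [|e ihe]; first by rewrite muln0 expr0; apply: homog_block1.
by rewrite exprS mulnS; apply: homog_blockM.
Qed.

Definition mxvec_unindex (t : 'I_(m * n.+1)) : 'I_m * 'I_n.+1 :=
  enum_val (cast_ord (esym (mxvec_cast m n.+1)) t).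

Lemma mxvec_unindexK t : mxvec_index (mxvec_unindex t).1 (mxvec_unindex t).2 = t.
Proof.
case/mxvec_indexP: t => i j.
by rewrite /mxvec_unindex /mxvec_index cast_ordK enum_rankK.
Qed.

Lemma mxvec_indexK i j : mxvec_unindex (mxvec_index i j) = (i, j).
Proof. by rewrite /mxvec_unindex /mxvec_index cast_ordK enum_rankK. Qed.

Lemma eq_mxvec_index (i i' : 'I_m) (j j' : 'I_n.+1) :
  (mxvec_index i j == mxvec_index i' j') = ((i, j) == (i', j')).
Proof.
apply/eqP/eqP => [/(congr1 mxvec_unindex)|[-> ->]] //.
by rewrite !mxvec_indexK.
Qed.

Lemma homog_block_var i (i' : 'I_m) (j : 'I_n.+1) :
  homog_block i (i' == i) 'X_(mxvec_index i' j).
Proof.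
move=> mu; rewrite msuppX inE => /eqP ->; rewrite /block_deg.
under eq_bigr => k _ do rewrite mnm1E eq_mxvec_index.
have [<-|ni'i] := eqVneq i' i; last by rewrite big1 // => k _; rewrite xpair_eqE (negbTE ni'i).
rewrite (bigD1 j) //= eqxx big1 // => k /negbTE nkj.
by rewrite xpair_eqE eqxx eq_sym nkj.
Qed.

Lemma block_deg_unindex i mu :
  (\sum_(t < m * n.+1) (((mxvec_unindex t).1 == i) * mu t))%N = block_deg i mu.
Proof.
rewrite (reindex (fun p : 'I_m * 'I_n.+1 => mxvec_index p.1 p.2)) /=; last first.
  by exists mxvec_unindex => [[i' j] _|t _]; rewrite ?mxvec_indexK ?mxvec_unindexK.
under eq_bigr => p _ do rewrite mxvec_indexK /=.
rewrite -(pair_bigA _ (fun i' j => ((i' == i) * mu (mxvec_index i' j))%N)) /=.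
rewrite (bigD1 i) //= [X in (_ + X)%N]big1 => [|i' /negbTE ->]; last first.
  by rewrite big1.
by rewrite addn0; apply: eq_bigr => j _; rewrite eqxx mul1n.
Qed.

End BlockDegree.

(** * Factorwise linear maps and Zariski closures *)

Section FactorwiseMaps.
Variables (F : closedFieldType) (m n k : nat).

Definition factor_form (A : 'I_m -> 'M[F]_(k.+1, n.+1)) (t : 'I_(m * k.+1)) :
    {mpoly F[m * n.+1]} :=
  let: (i, r) := mxvec_unindex t in \sum_(j < n.+1) A i r j *: 'X_(mxvec_index i j).

Definition factor_pullback (A : 'I_m -> 'M[F]_(k.+1, n.+1)) (f : {mpoly F[m * k.+1]}) :=
  f \mPo [tuple factor_form A t | t < m * k.+1].

Lemma mv_coordsE p (w : 'I_m -> 'cV[F]_p.+1) i j : mv_coords w (mxvec_index i j) = w i j 0.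
Proof. by rewrite /mv_coords mxvecE mxE. Qed.

Lemma meval_factor_form p (w : 'I_m -> 'cV[F]_p.+1) (i : 'I_m) (c : 'I_p.+1 -> F) :
  (\sum_j c j *: 'X_(mxvec_index i j)).@[mv_coords w] = \sum_j c j * w i j 0.
Proof.
by rewrite raddf_sum /=; apply: eq_bigr => j _; rewrite mevalZ mevalXU mv_coordsE.
Qed.

Lemma meval_factor_pullback A f (w : 'I_m -> 'cV[F]_n.+1) :
  (factor_pullback A f).@[mv_coords w] = f.@[mv_coords (fun i => A i *m w i)].
Proof.
rewrite comp_mpoly_meval; apply: meval_eq => t.
rewrite tnth_mktuple /factor_form -[in RHS](mxvec_unindexK t).
by case: (mxvec_unindex t) => i r /=; rewrite mv_coordsE mxE meval_factor_form.
Qed.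

Lemma factor_pullback_multihomogeneous A f :
  multihomogeneous f -> multihomogeneous (factor_pullback A f).
Proof.
move=> hf i; have [d hd] := hf i; exists d.
rewrite /factor_pullback comp_mpolyEX big_seq; apply: homog_block_sum => mu mu_f.
have <- : block_deg i mu = d := hd mu mu_f.
apply: homog_blockZ; rewrite comp_mpolyX -block_deg_unindex.
apply: homog_block_prod => t; apply: homog_blockX.
rewrite tnth_mktuple /factor_form; case: (mxvec_unindex t) => i' r /=.
by apply: homog_block_sum => j _; apply/homog_blockZ/homog_block_var.
Qed.

Lemma mv_closure_map (A : 'I_m -> 'M[F]_(k.+1, n.+1))
    (S : ('I_m -> 'cV[F]_n.+1) -> Prop) (T : ('I_m -> 'cV[F]_k.+1) -> Prop) w :
  (forall v, S v -> (forall i, v i != 0) ->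
     T (fun i => A i *m v i) /\ forall i, A i *m v i != 0) ->
  mv_closure S w -> (forall i, A i *m w i != 0) -> mv_closure T (fun i => A i *m w i).
Proof.
move=> AST [_ Sw] Aw_neq0; split => // f f_homog f_T.
rewrite -meval_factor_pullback; apply: Sw; first exact: factor_pullback_multihomogeneous.
move=> v Sv v_neq0; rewrite meval_factor_pullback.
by have [Tv Av_neq0] := AST v Sv v_neq0; apply: f_T.
Qed.

End FactorwiseMaps.

Section ClosureConstraints.
Variables (F : closedFieldType) (m n : nat) (S : ('I_m -> 'cV[F]_n.+1) -> Prop).

Lemma mv_closure_orth (i0 : 'I_m) (c : 'cV[F]_n.+1) w :
  (forall v, S v -> (forall i, v i != 0) -> (v i0)^T *m c = 0) ->
  mv_closure S w -> (w i0)^T *m c = 0.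
Proof.
move=> S_orth [_ Sw].
pose p : {mpoly F[m * n.+1]} := \sum_j c j 0 *: 'X_(mxvec_index i0 j).
have pE v : p.@[mv_coords v] = ((v i0)^T *m c) 0 0.
  by rewrite meval_factor_form mxE; apply: eq_bigr => j _; rewrite mxE mulrC.
have p_homog : multihomogeneous p.
  move=> i; exists (i0 == i).
  by apply: homog_block_sum => j _; apply/homog_blockZ/homog_block_var.
apply/matrixP => a b; rewrite !ord1 [RHS]mxE -pE; apply: Sw => // v Sv v_neq0.
by rewrite pE S_orth // mxE.
Qed.

Lemma mv_closure_colspace (i0 : 'I_m) p (M : 'M[F]_(n.+1, p)) w :
  (forall v, S v -> (forall i, v i != 0) -> exists a, v i0 = M *m a) ->
  mv_closure S w -> exists a, w i0 = M *m a.
Proof.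
move=> S_col Sw.
suff /submxP[D wD] : ((w i0)^T <= M^T)%MS.
  by exists D^T; rewrite -[w i0]trmxK wD trmx_mul trmxK.
rewrite submxE; apply/eqP/matrixP => r c; rewrite ord1 [RHS]mxE.
have wK_c : (w i0)^T *m col c (cokermx M^T) = 0.
  apply: (mv_closure_orth _ Sw) => v Sv v_neq0; have [a ->] := S_col v Sv v_neq0.
  by rewrite trmx_mul -mulmxA colE (mulmxA M^T) mulmx_coker mul0mx mulmx0.
move/matrixP/(_ 0 0): wK_c; rewrite [RHS]mxE => <-.
by rewrite !mxE; apply: eq_bigr => j _; rewrite !mxE.
Qed.

End ClosureConstraints.

Section ProjectiveEquality.
Variables (F : closedFieldType) (n : nat).
Implicit Types u v : 'cV[F]_n.

Lemma proj_eq_refl u : proj_eq u u.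
Proof. by exists 1; [exact: oner_neq0 | rewrite scale1r]. Qed.

Lemma proj_eq_mull k (A : 'M[F]_(k, n)) u v : proj_eq u v -> proj_eq (A *m u) (A *m v).
Proof. by case=> s s_neq0 ->; exists s => //; rewrite scalemxAr. Qed.

Lemma proj_eq_neq0 u v : proj_eq u v -> (u != 0) = (v != 0).
Proof. by case=> s s_neq0 ->; rewrite scalemx_eq0 negb_or s_neq0. Qed.

End ProjectiveEquality.

Lemma mv_lin_iso_closure (F : closedFieldType) m n k
    (A : 'I_m -> 'M[F]_(k.+1, n.+1)) (B : 'I_m -> 'M[F]_(n.+1, k.+1))
    (S : ('I_m -> 'cV[F]_n.+1) -> Prop) (T : ('I_m -> 'cV[F]_k.+1) -> Prop) :
  (forall i, A i *m B i = 1%:M) ->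
  (forall w, mv_closure S w -> forall i, B i *m (A i *m w i) = w i) ->
  (forall v, S v -> (forall i, v i != 0) ->
     T (fun i => A i *m v i) /\ forall i, A i *m v i != 0) ->
  (forall t, T t -> (forall i, t i != 0) ->
     S (fun i => B i *m t i) /\ forall i, B i *m t i != 0) ->
  mv_lin_iso A (mv_closure S) (mv_closure T).
Proof.
move=> AB BA AST BTS.
have Aw_neq0 w : mv_closure S w -> forall i, A i *m w i != 0.
  by move=> Sw i; apply: contraNneq (Sw.1 i) => Aw0; rewrite -(BA w Sw i) Aw0 mulmx0.
split=> [w Sw | z Tz | w w' Sw Sw' Aww' i].
- exact: mv_closure_map AST Sw (Aw_neq0 w Sw).
- exists (fun i => B i *m z i).
    apply: (mv_closure_map BTS Tz) => i; apply: contraNneq (Tz.1 i) => Bz0.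
    by rewrite -[z i]mul1mx -(AB i) -mulmxA Bz0 mulmx0.
  by move=> i; rewrite mulmxA AB mul1mx; apply: proj_eq_refl.
- by rewrite -(BA w Sw i) -(BA w' Sw' i); apply: proj_eq_mull.
Qed.

(** * Linear algebra *)

Lemma col_inj_unitmx (F : fieldType) n (M : 'M[F]_n) :
  (forall v : 'cV_n, M *m v = 0 -> v = 0) -> M \in unitmx.
Proof.
move=> M_inj; rewrite unitmxE unitfE -det_tr; apply/det0P => -[v v_neq0 vM].
suff /(congr1 trmx) : v^T = 0 by rewrite trmxK trmx0 => v0; rewrite v0 eqxx in v_neq0.
by apply: M_inj; rewrite -[M]trmxK -trmx_mul vM trmx0.
Qed.

Lemma mxrank_col_inj (F : fieldType) p q (A : 'M[F]_(p, q)) :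
  \rank A = q -> forall v : 'cV_q, A *m v = 0 -> v = 0.
Proof.
move=> rankA v Av0; have freeAT : row_free A^T by rewrite /row_free mxrank_tr rankA.
by apply/trmx_inj/(row_free_inj freeAT); rewrite -trmx_mul Av0 !trmx0 mul0mx.
Qed.

Lemma cross_orth_left (F : closedFieldType) (a b : 'cV[F]_3) : (cross a b)^T *m a = 0.
Proof.
apply/matrixP => i j; rewrite !ord1 !mxE !big_ord_recr big_ord0 /= !mxE /=.
have -> : widen_ord (leqnSn 2) (widen_ord (leqnSn 1) ord_max) = inord 0 :> 'I_3.
  by apply/val_inj; rewrite /= inordK.
have -> : widen_ord (leqnSn 2) ord_max = inord 1 :> 'I_3.
  by apply/val_inj; rewrite /= inordK.
have -> : ord_max = inord 2 :> 'I_3.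
  by apply/val_inj; rewrite /= inordK.
have m1 : ((0 + 1) %% 3 = 1)%N by [].
have m2 : ((0 + 2) %% 3 = 2)%N by [].
have m3 : ((1 + 2) %% 3 = 0)%N by [].
have m4 : ((2 + 1) %% 3 = 0)%N by [].
have m5 : ((2 + 2) %% 3 = 1)%N by [].
rewrite ?m1 ?m2 ?m3 ?m4 ?m5; ring.
Qed.

Section HyperplaneInverse.
Variables (F : fieldType) (n : nat) (A : 'M[F]_(n, n.+1)) (c : 'cV[F]_n.+1).
Hypothesis A_inj : forall l : 'cV_n.+1, l^T *m c = 0 -> A *m l = 0 -> l = 0.

Definition hyperplane_inv : 'M[F]_(n.+1, n) :=
  invmx (col_mx c^T A) *m col_mx (0 : 'M_(1, n)) 1%:M.

Lemma hyperplane_unitmx : col_mx c^T A \in unitmx.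
Proof.
apply: col_inj_unitmx => l; rewrite mul_col_mx => /eqP; rewrite col_mx_eq0.
case/andP=> /eqP cl0 /eqP Al0; apply: A_inj Al0.
by rewrite -[_ *m c]trmxK trmx_mul trmxK cl0 trmx0.
Qed.

Lemma mul_hyperplane_inv : A *m hyperplane_inv = 1%:M.
Proof.
have : col_mx c^T A *m hyperplane_inv = col_mx 0 1%:M.
  by rewrite mulmxA mulmxV ?mul1mx // hyperplane_unitmx.
by rewrite mul_col_mx => /eq_col_mx[].
Qed.

Lemma hyperplane_invK (l : 'cV_n.+1) : l^T *m c = 0 -> hyperplane_inv *m (A *m l) = l.
Proof.
move=> lc0; have cl0 : c^T *m l = 0 by rewrite -[_ *m l]trmxK trmx_mul trmxK lc0 trmx0.
rewrite /hyperplane_inv -mulmxA.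
have -> : col_mx 0 1%:M *m (A *m l) = col_mx c^T A *m l.
  by rewrite !mul_col_mx mul0mx mul1mx cl0.
by rewrite mulKmx // hyperplane_unitmx.
Qed.

End HyperplaneInverse.

(** * The line and point cases *)

Section LineCase.
Variables (F : closedFieldType) (m : nat) (C : 'I_m -> 'M[F]_(3,4)).
Variables (P : 'M[F]_(4,2)) (Psi : 'I_m -> 'M[F]_(2,3)).
Hypothesis rankP : \rank P = 2%N.
Hypothesis P_no_center : forall i c, is_center (C i) c -> ~ (exists a, c = P *m a).
Hypothesis Psi_inj : forall i (y : 'cV[F]_3),
  (exists a, y = C i *m P *m a) -> Psi i *m y = 0 -> y = 0.

Let Ct i := Psi i *m (C i *m P).

Lemma CP_inj i (a : 'cV_2) : C i *m P *m a = 0 -> a = 0.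
Proof.
move=> CPa0; apply: (mxrank_col_inj rankP); apply/eqP; apply: contraT => Pa_neq0.
by case: (P_no_center (c := P *m a) (i := i)); [split=> //; rewrite mulmxA | exists a].
Qed.

Lemma Ct_inj i (a : 'cV_2) : Ct i *m a = 0 -> a = 0.
Proof.
move=> Cta0; apply: (@CP_inj i); apply: (Psi_inj (i := i)); first by exists a.
by rewrite mulmxA.
Qed.

Lemma Ct_unitmx i : Ct i \in unitmx.
Proof. by apply: col_inj_unitmx; apply: Ct_inj. Qed.

Let B i := C i *m P *m invmx (Ct i).

Lemma Psi_B i : Psi i *m B i = 1%:M.
Proof. by rewrite /B mulmxA mulmxV // Ct_unitmx. Qed.

Lemma B_Psi i (a : 'cV_2) : B i *m (Psi i *m (C i *m P *m a)) = C i *m P *m a.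
Proof. by rewrite /B [Psi i *m _]mulmxA -mulmxA mulKmx // Ct_unitmx. Qed.

Lemma MCL_colspace w : MCL C P w -> forall i, exists a, w i = C i *m P *m a.
Proof.
move=> MCLw i; apply: (mv_closure_colspace _ MCLw) => v [_ [_ [a ->]] hv] _.
by have [_ [s _ ->]] := hv i; exists (s *: a); rewrite -scalemxAr mulmxA.
Qed.

Lemma MCL_iso : mv_lin_iso Psi (MCL C P) (multiview Ct).
Proof.
apply: (mv_lin_iso_closure (B := B)) => [i | w MCLw i |
    v [Y [Y_neq0 [a eY]] hv] _ | t [b b_neq0 ht] _].
- exact: Psi_B.
- by have [a ->] := MCL_colspace MCLw i; apply: B_Psi.
- have a_neq0 : a != 0 by apply: contraNneq Y_neq0 => a0; rewrite eY a0 mulmx0.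
  have Cta_neq0 i : Ct i *m a != 0 by apply: contraNneq a_neq0 => /Ct_inj ->.
  have e i : proj_eq (Psi i *m v i) (Ct i *m a).
    by rewrite /Ct -!mulmxA -eY; apply: proj_eq_mull (hv i).2.
  split; last by move=> i; rewrite (proj_eq_neq0 (e i)).
  by exists a.
- have CPb_neq0 i : C i *m (P *m b) != 0.
    by apply: contraNneq b_neq0 => CPb0; apply/eqP/(@CP_inj i); rewrite -mulmxA.
  have e i : proj_eq (B i *m t i) (C i *m (P *m b)).
    by have := proj_eq_mull (B i) (ht i).2; rewrite /Ct -mulmxA B_Psi -mulmxA.
  split; last by move=> i; rewrite (proj_eq_neq0 (e i)).
  exists (P *m b); last by move=> i; split; [exact: CPb_neq0 | exact: e].
  by split; [apply: contraNneq b_neq0 => /(mxrank_col_inj rankP) -> | exists b].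
Qed.

End LineCase.

Section PointCase.
Variables (F : closedFieldType) (m : nat) (C : 'I_m -> 'M[F]_(3,4)) (X : 'cV[F]_4).
Variables (Q : 'M[F]_(6,3)) (Psi Ch : 'I_m -> 'M[F]_(2,3)).
Hypothesis rankQ : \rank Q = 3%N.
Hypothesis Q_plucker : forall a, exists Y, Q *m a = plucker X Y.
Hypothesis plucker_Q : forall Y, exists a, plucker X Y = Q *m a.
Hypothesis Psi_inj : forall i (l : 'cV[F]_3),
  l^T *m (C i *m X) = 0 -> Psi i *m l = 0 -> l = 0.
Hypothesis ChE : forall i a Y, Q *m a = plucker X Y ->
  Ch i *m a = Psi i *m cross (C i *m X) (C i *m Y).

Lemma LCX_orth w : LCX C X w -> forall i, (w i)^T *m (C i *m X) = 0.
Proof.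
move=> LCXw i; apply: (mv_closure_orth _ LCXw) => v [Y _ hv] _.
by have [_ [s _ ->]] := hv i; rewrite linearZ /= -scalemxAl cross_orth_left scaler0.
Qed.

Let B i := hyperplane_inv (Psi i) (C i *m X).

Lemma LCX_iso : mv_lin_iso Psi (LCX C X) (multiview Ch).
Proof.
apply: (mv_lin_iso_closure (B := B)) => [i | w LCXw i |
    v [Y pXY_neq0 hv] _ | t [b b_neq0 ht] _].
- exact: mul_hyperplane_inv (Psi_inj (i := i)).
- by rewrite /B (hyperplane_invK (Psi_inj (i := i))) // LCX_orth.
- have [a pXY] := plucker_Q Y; have ChaE i := ChE i (esym pXY).
  have a_neq0 : a != 0 by apply: contraNneq pXY_neq0 => a0; rewrite pXY a0 mulmx0.
  have Cha_neq0 i : Ch i *m a != 0.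
    rewrite ChaE; apply: contraNneq (hv i).1.
    by move/(Psi_inj (cross_orth_left _ _))/eqP.
  have e i : proj_eq (Psi i *m v i) (Ch i *m a).
    by rewrite ChaE; apply: proj_eq_mull (hv i).2.
  split; last by move=> i; rewrite (proj_eq_neq0 (e i)).
  by exists a.
- have [Y QbY] := Q_plucker b; have ChbE i := ChE i QbY.
  have pXY_neq0 : plucker X Y != 0.
    by rewrite -QbY; apply: contraNneq b_neq0 => /(mxrank_col_inj rankQ)/eqP.
  have cr_neq0 i : cross (C i *m X) (C i *m Y) != 0.
    by apply: contraNneq (ht i).1 => cr0; rewrite ChbE cr0 mulmx0.
  have e i : proj_eq (B i *m t i) (cross (C i *m X) (C i *m Y)).
    have := proj_eq_mull (B i) (ht i).2.
    by rewrite ChbE (hyperplane_invK (Psi_inj (i := i))) // cross_orth_left.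
  split; last by move=> i; rewrite (proj_eq_neq0 (e i)).
  by exists Y.
Qed.

End PointCase.

Theorem theorem1p3 (F : closedFieldType) (m : nat) (C : 'I_m -> 'M[F]_(3,4)) :
  camera_arrangement C ->
  (* (1) L = column space of P, phi_L^{-1} = P, psi_i = restriction of Psi i *)
  (forall P : 'M[F]_(4,2), \rank P = 2%N ->
   (forall i c, is_center (C i) c -> ~ (exists a, c = P *m a)) ->
   forall Psi : 'I_m -> 'M[F]_(2,3),
   (forall i (y : 'cV[F]_3), (exists a, y = C i *m P *m a) -> Psi i *m y = 0 -> y = 0) ->
   let Ct := fun i => Psi i *m (C i *m P) in
   (forall w, MCL C P w -> forall i, exists a, w i = C i *m P *m a) /\
   mv_lin_iso Psi (MCL C P) (multiview Ct)) /\
  (* (2) phi_X^{-1} = Q (onto the Pluecker plane Lambda(X)),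
         psi_i = restriction of Psi i to Lambda(C_i X) *)
  (forall X : 'cV[F]_4, X != 0 ->
   (forall i c, is_center (C i) c -> ~ proj_eq X c) ->
   forall Q : 'M[F]_(6,3), \rank Q = 3%N ->
   (forall a, exists Y, Q *m a = plucker X Y) ->
   (forall Y, exists a, plucker X Y = Q *m a) ->
   forall Psi : 'I_m -> 'M[F]_(2,3),
   (forall i (l : 'cV[F]_3), l^T *m (C i *m X) = 0 -> Psi i *m l = 0 -> l = 0) ->
   forall Ch : 'I_m -> 'M[F]_(2,3),
   (forall i a Y, Q *m a = plucker X Y ->
      Ch i *m a = Psi i *m cross (C i *m X) (C i *m Y)) ->
   (forall w, LCX C X w -> forall i, (w i)^T *m (C i *m X) = 0) /\
   mv_lin_iso Psi (LCX C X) (multiview Ch)).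
Proof.
move=> _; split.
- move=> P rankP P_no_center Psi Psi_inj Ct.
  by split; [exact: MCL_colspace | exact: (MCL_iso rankP P_no_center Psi_inj)].
- move=> X _ _ Q rankQ Q_plucker plucker_Q Psi Psi_inj Ch ChE.
  by split; [exact: LCX_orth | exact: (LCX_iso rankQ Q_plucker plucker_Q Psi_inj ChE)].
Qed.
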